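(* Let $X$ be a compact metric space and $f:X\to X$ a continuous minimal map. Let $D=\{\dots,x_{-2},x_{-1},x_0,x_1,x_2,\dots\}\subseteq X$ be such that $f(x_n)=x_{n+1}$ for every integer $n$. Suppose that some point of $D$ has more than one $f$-preimage in $X$ (equivalently, an $f$-preimage in $X\setminus D$). Then $(f|_D)^{-1}$ is not continuous, i.e., there is no continuous map $g:D\to D$ with $g(f(x))=x$ and $f(g(x))=x$ for all $x\in D$.
   Context: A continuous selfmap of a compact metric space is minimal if every forward orbit is dense (equivalently, there is no proper nonempty closed invariant subset). *)

From HB Require Import structures.
From mathcomp Require Import all_boot all_order all_algebra.
From mathcomp Require Import all_classical all_reals all_analysis.
Set Implicit Arguments. Unset Strict Implicit. Unset Printing Implicit Defensive.
Import Order.TTheory GRing.Theory Num.Theory.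
Local Open Scope classical_set_scope.

Definition forward_orbit (X : Type) (f : X -> X) (x : X) : set X :=
  [set iter n f x | n in [set: nat]].

Definition minimal_map (X : topologicalType) (f : X -> X) : Prop :=
  continuous f /\ forall x : X, closure (forward_orbit f x) = [set: X].

From HB Require Import structures.
From mathcomp Require Import all_boot all_order all_algebra.
From mathcomp Require Import all_classical all_reals all_analysis.
Import Order.TTheory GRing.Theory Num.Theory.
Local Open Scope classical_set_scope.
Local Open Scope ring_scope.

(** The forward orbit of [x 0] lies in the bi-infinite orbit [D = range x], so
    minimality makes [D] dense. A preimage [y] of a point of [D] is then a limit
    of points [z] of [D]; along them [f z --> f y] inside [D], and continuity of
    [g] on [D] gives [z = g (f z) --> g (f y)]. Hence [y = g (f y)]: every point
    of [D] has exactly one preimage, contradicting the hypothesis. *)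

Lemma forward_orbit_sub_range {T : Type} {f : T -> T} {x : int -> T} :
  (forall n, f (x n) = x (n + 1)) -> forward_orbit f (x 0) `<=` range x.
Proof.
move=> hx _ [k _ <-]; exists k%:Z => //.
elim: k => [|k IH] //=; rewrite -IH hx; congr x.
by rewrite -[k.+1]addn1 PoszD.
Qed.

Lemma minimal_map_dense_superset {X : topologicalType} {f : X -> X} {x : X}
    {D : set X} :
  minimal_map f -> forward_orbit f x `<=` D -> closure D = [set: X].
Proof.
move=> [_ dense] orbD; apply/seteqP; split=> // y _.
by apply: (closureS orbD); rewrite dense.
Qed.

Lemma dense_left_inverse_eq {X : topologicalType} {D : set X} {f g : X -> X} :
  hausdorff_space X -> closure D = [set: X] -> continuous f ->
  f @` D `<=` D -> {within D, continuous g} ->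
  (forall p, D p -> g (f p) = p) ->
  forall y, D (f y) -> g (f y) = y.
Proof.
move=> hX clD fc fD gc gf y Dfy.
have PF : ProperFilter (within D (nbhs y)).
  by apply: within_nbhs_proper; rewrite clD.
have f_within : f @ within D (nbhs y) --> within D (nbhs (f y)).
  move=> W; rewrite /within /= !nbhs_simpl => /(fc y); rewrite nbhs_simpl /=.
  by apply: filterS => z Wz Dz; apply/Wz/fD; exists z.
have gf_cvg : (g \o f) @ within D (nbhs y) --> g (f y).
  apply: cvg_trans ((subspace_continuousP D g).1 gc _ Dfy).
  exact: cvg_comp f_within _.
have id_cvg : id @ within D (nbhs y) --> g (f y).
  apply: cvg_trans gf_cvg; apply: fmap_within_eq => z; rewrite inE => Dz.
  by rewrite /= gf.
have id_cvg_y : within D (nbhs y) --> y by apply: cvg_within.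
exact: (@cvg_unique _ hX _ PF _ _ id_cvg id_cvg_y).
Qed.

Theorem lemma3 (R : realType) (X : pseudoMetricType R)
  (hX : hausdorff_space X) (cX : compact [set: X])
  (f : X -> X) (hf : minimal_map f)
  (x : int -> X) (hx : forall n : int, f (x n) = x (n + 1)) :
  (exists (n : int) (y1 y2 : X), y1 <> y2 /\ f y1 = x n /\ f y2 = x n) ->
  ~ (exists g : X -> X,
       [/\ {within range x, continuous g},
           (forall p, range x p -> range x (g p)),
           (forall p, range x p -> g (f p) = p) &
           (forall p, range x p -> f (g p) = p)]).
Proof.
move=> [n [y1 [y2 [y12 [fy1 fy2]]]]] [g [gc _ gf _]].
have clD := minimal_map_dense_superset hf (forward_orbit_sub_range hx).
have fD : f @` range x `<=` range x.
  by move=> _ [_ [k _ <-] <-]; rewrite hx; exists (k + 1).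
have Dxn : range x (x n) by exists n.
have preimage_eq y : f y = x n -> y = g (x n).
  move=> fy; rewrite -fy.
  by rewrite (dense_left_inverse_eq hX clD hf.1 fD gc gf) // fy.
by apply: y12; rewrite (preimage_eq _ fy1) (preimage_eq _ fy2).
Qed.
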